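(* Let $P$ be a valid path with $m=m_T^P$ toll arcs $\tau_1,\dots,\tau_m$, and define recursively for $k=1,\dots,m$ $$t_k=\min_{0\le i<k<j\le m+1}\Big\{\mathcal{U}_{i,j}-\mathcal{L}_{i,j}-\sum_{l=i+1}^{k-1}t_l\Big\}.$$ Then the toll assignment $T(\tau_k)=t_k$ ($k=1,\dots,m$) is optimal for $P$: it is consistent with $P$, and every toll vector $T'$ consistent with $P$ satisfies $\sum_{k=1}^m T'(\tau_k)\le\sum_{k=1}^m t_k$.
   Context: Setting: $G=(V,A)$ is a directed multigraph with $A=A_T\cup A_U$ partitioned into toll arcs and toll-free arcs, fixed costs $c:A_T\to\mathbf{N}$, $d:A_U\to\mathbf{N}$, and vertices $s,t$ such that there is an $s$–$t$ path using only toll-free arcs. A toll vector $T$ assigns a toll $T(e)\ge0$ to each toll arc; under $T$ a toll arc $e$ costs $c(e)+T(e)$ and a toll-free arc $e$ costs $d(e)$; path length is the sum of arc costs. For an $s$–$t$ path $P$, $\mathcal{N}_T(P)$ is the network with all toll arcs not on $P$ deleted, with costs induced by $T$. A path $P$ from $s$ to $t$ is valid if it contains $m_T^P\ge1$ toll arcs and is a shortest $s$–$t$ path in $\mathcal{N}_0(P)$ (all tolls zero). Write a valid path as $P=(\upsilon_{0,1},\tau_1,\upsilon_{1,2},\dots,\tau_m,\upsilon_{m,m+1})$ with $\tau_i$ the $i$-th toll arc in order of traversal; set $\mathrm{TERM}(\tau_0)=s$, $\mathrm{INIT}(\tau_{m+1})=t$. For $0\le i<j\le m+1$, $\mathcal{U}_{i,j}$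 is the length of a shortest path from $\mathrm{TERM}(\tau_i)$ to $\mathrm{INIT}(\tau_j)$ using only toll-free arcs ($+\infty$ if none), and $\mathcal{L}_{k,l}=\sum_{i=k}^{l-1}\mathcal{U}_{i,i+1}+\sum_{i=k+1}^{l-1}c(\tau_i)$ (empty sums are $0$). A toll vector is consistent with $P$ if $P$ is a shortest $s$–$t$ path in $\mathcal{N}_T(P)$ (only tolls on arcs of $P$ matter). *)

From HB Require Import structures.
From mathcomp Require Import all_boot all_order all_algebra.
From mathcomp Require Import boolp.
Set Implicit Arguments. Unset Strict Implicit. Unset Printing Implicit Defensive.
Import Order.TTheory GRing.Theory Num.Theory.

Section Toll.
(* A directed multigraph: vertex type V, arc type A, arc e goes src e -> dst e.
   toll e <=> e is a toll arc (e in A_T); otherwise e is toll-free (A_U).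
   w e is the fixed cost: c(e) for toll arcs, d(e) for toll-free arcs. *)
Variables (V A : finType) (src dst : A -> V) (toll : pred A) (w : A -> nat).
Variables (s t : V).

Fixpoint walk (u v : V) (p : seq A) : bool :=
  match p with
  | [::] => u == v
  | e :: p' => (src e == u) && walk (dst e) v p'
  end.

Definition is_path (u v : V) (p : seq A) : bool :=
  walk u v p && uniq (u :: map dst p).

Definition nlen (f : A -> nat) (p : seq A) : nat := \sum_(e <- p) f e.

Definition tolls_of (p : seq A) : seq A := [seq e <- p | toll e].

Definition inN (P : seq A) (e : A) : bool := ~~ toll e || (e \in P).

Definition valid (P : seq A) : Prop :=
  [/\ is_path s t P, (0 < size (tolls_of P))%N &
      forall p, is_path s t p -> all (inN P) p -> (nlen w P <= nlen w p)%N].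

(* shortest toll-free path length from u to v; None stands for +infinity *)
Definition tf_len (u v : V) (n : nat) : bool :=
  `[< exists p, [/\ is_path u v p, all (predC toll) p & nlen w p = n] >].

Definition tfdist (u v : V) : option nat :=
  match pselect (exists n, tf_len u v n) with
  | left H => Some (ex_minn H)
  | right _ => None
  end.

Section Path.
Variable P : seq A.
Let tau := tolls_of P.
Let m := size tau.

Definition TERM (i : nat) : V :=
  if i is i'.+1 then (if onth tau i' is Some e then dst e else s) else s.
Definition INIT (j : nat) : V :=
  if j is j'.+1 then (if onth tau j' is Some e then src e else t) else t.

Definition Uij (i j : nat) : option nat := tfdist (TERM i) (INIT j).
Definition ctau (i : nat) : nat := nth 0%N (map w tau) i.-1.
(* L_{k,l}; only finite U_{i,i+1} occur here for valid paths *)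
Definition Lkl (k l : nat) : nat :=
  (\sum_(k <= i < l) odflt 0%N (Uij i i.+1) + \sum_(k.+1 <= i < l) ctau i)%N.

Variable R : realFieldType.
Local Open Scope ring_scope.

Definition seqmin (l : seq R) : R := foldr Num.min (head 0 l) l.

(* t_k given ts = [:: t_1; ...; t_(k-1)]; the minimum is over the
   pairs 0 <= i < k < j <= m+1 with U_{i,j} finite (terms with
   U_{i,j} = +infinity never attain the minimum; (0,m+1) is finite) *)
Definition next_toll (ts : seq R) (k : nat) : R :=
  seqmin [seq (u%:R - (Lkl ij.1 ij.2)%:R
                - \sum_(ij.1.+1 <= l < k) nth 0 ts l.-1)
         | ij <- [seq (i, j) | i <- iota 0 k, j <- iota k.+1 (m.+1 - k)],
           u <- (if Uij ij.1 ij.2 is Some u then [:: u] else [::])].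

Fixpoint opt_tolls (n : nat) : seq R :=
  if n is n'.+1 then let ts := opt_tolls n' in rcons ts (next_toll ts n)
  else [::].

Definition Topt (e : A) : R :=
  if e \in tau then nth 0 (opt_tolls m) (index e tau) else 0.

End Path.

Local Open Scope ring_scope.
Definition costT (R : realFieldType) (T : A -> R) (e : A) : R :=
  (w e)%:R + (if toll e then T e else 0).
Definition rlen (R : realFieldType) (T : A -> R) (p : seq A) : R :=
  \sum_(e <- p) costT T e.

Definition toll_vector (R : realFieldType) (T : A -> R) : Prop :=
  forall e, toll e -> 0 <= T e.

Definition consistent (R : realFieldType) (P : seq A) (T : A -> R) : Prop :=
  forall p, is_path s t p -> all (inN P) p -> rlen T P <= rlen T p.

End Toll.

From mathcomp Require Import all_boot all_order all_algebra boolp.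
From mathcomp Require Import lra zify.
Import Order.TTheory GRing.Theory Num.Theory.
Set Implicit Arguments. Unset Strict Implicit. Unset Printing Implicit Defensive.

(* A nonnegative toll vector T is consistent with P iff, for all i < j with
   U_{i,j} finite, the T-cost of the subpath of P from TERM(tau_i) to
   INIT(tau_j), namely L_{i,j} + sum_{i<l<j} T(tau_l), is at most U_{i,j}.
   Necessity: splicing a shortest toll-free detour into P and removing loops
   gives a competing path.  Sufficiency: a competing path, cut at its toll
   arcs (each of which is some tau_b), is compared piece by piece with the
   suffixes of P.  Optimal tolls thus maximise sum_l T(tau_l) under the
   interval constraints sum_{i<l<j} T(tau_l) <= U_{i,j} - L_{i,j}, and the
   greedy t_k saturates the constraint of the pair (i, j) attaining its
   minimum on i < l <= k, which bounds every feasible prefix sum by induction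
   on k. *)

Lemma drop_catl (T : Type) n (s1 s2 : seq T) :
  n <= size s1 -> drop n (s1 ++ s2) = drop n s1 ++ s2.
Proof.
by move=> le_n_s1; rewrite -{1}(cat_take_drop n s1) -catA drop_size_cat // size_takel.
Qed.

Lemma drop_take_nth (T : Type) (x0 : T) (p : seq T) i j k :
  i <= j -> j < k -> j < size p ->
  drop i (take k p) = drop i (take j p) ++ nth x0 p j :: drop j.+1 (take k p).
Proof.
move=> ij jk jp; rewrite -{1}(cat_take_drop j.+1 (take k p)) take_takel //.
by rewrite (take_nth x0) // -cats1 -catA drop_catl // size_takel // ltnW.
Qed.

Lemma ler_sum_subseq (R : numDomainType) (I : eqType) (F : I -> R) q p :
  (forall i, 0 <= F i)%R -> subseq q p -> (\sum_(i <- q) F i <= \sum_(i <- p) F i)%R.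
Proof.
move=> F_ge0; elim: p q => [|x p IH] [|y q] //.
- by move=> _; rewrite big_nil; apply: sumr_ge0.
- rewrite [subseq _ _]/= !big_cons; case: eqP => [-> /IH|_ /IH]; first by rewrite lerD2l.
  by rewrite big_cons => /le_trans; apply; rewrite lerDr.
Qed.

Section SeqMin.
Variable R : realFieldType.
Local Open Scope ring_scope.

Lemma seqmin_le (l : seq R) x : x \in l -> seqmin l <= x.
Proof.
rewrite /seqmin; move: (head 0 l) => a.
by elim: l => //= y l IH; rewrite in_cons ge_min => /orP[/eqP->|/IH->]; rewrite ?lexx ?orbT.
Qed.

Lemma seqmin_in (l : seq R) x : x \in l -> seqmin l \in l.
Proof.
have min_in (a : R) (l' : seq R) : foldr Num.min a l' \in a :: l'.
  elim: l' => [|y l' IH] /=; first by rewrite mem_seq1.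
  rewrite minEle; case: ifP => _; first by rewrite !inE eqxx orbT.
  by move: IH; rewrite !inE => /orP[->|->]; rewrite ?orbT.
case: l => [//|y l] _; have := min_in y (y :: l).
by rewrite /seqmin /= in_cons => /orP[/eqP->|]; rewrite ?mem_head.
Qed.

End SeqMin.

Section Walks.
Variables (V A : finType) (src dst : A -> V).

Lemma walk_cat u v p1 p2 : walk src dst u v (p1 ++ p2) =
  walk src dst u (last u (map dst p1)) p1 && walk src dst (last u (map dst p1)) v p2.
Proof.
elim: p1 u => [|e p1 IH] u /=; first by rewrite eqxx.
by rewrite IH andbA.
Qed.

Lemma walk_last u v p : walk src dst u v p -> last u (map dst p) = v.
Proof. by elim: p u => [|e p IH] u /=; [move/eqP | case/andP=> _ /IH]. Qed.

Lemma walk_rcons u v p e :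
  walk src dst u v p -> src e = v -> walk src dst u (dst e) (rcons p e).
Proof. by move=> wp se; rewrite -cats1 walk_cat (walk_last wp) wp /= se !eqxx. Qed.

Lemma walk_shorten u v p : walk src dst u v p ->
  exists2 q, is_path src dst u v q & subseq q p.
Proof.
elim: p u => [|e p IH] u /=; first by exists [::]; rewrite /is_path /= ?andbT.
case/andP=> /eqP se /IH[q /andP[wq uq] sub_qp].
have [u_in|u_out] := boolP (u \in dst e :: map dst q); last first.
  by exists (e :: q); rewrite /is_path /= ?eqxx // se eqxx wq /= u_out.
set vs := dst e :: map dst q in u_in uq; set i := index u vs.
have le_iq : i <= size q by rewrite -ltnS -[(size q).+1](size_map dst (e :: q)) index_mem.
have drop_vs : drop i vs = last (dst e) (map dst (take i q)) :: map dst (drop i q).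
  rewrite /vs; elim: (q) (dst e) (i) le_iq => [|y q' IHq] x [|n] //= le_nq.
  by rewrite IHq.
have last_take : last (dst e) (map dst (take i q)) = u.
  by move: drop_vs; rewrite (drop_nth u) ?index_mem // nth_index // => -[].
exists (drop i q).
  apply/andP; split; last by rewrite -last_take -drop_vs drop_uniq.
  by move: wq; rewrite -{1}(cat_take_drop i q) walk_cat last_take => /andP[].
by apply: subseq_trans (drop_subseq _ _) (subseq_trans sub_qp (subseq_cons _ _)).
Qed.

End Walks.

Section TollFreeDistance.
Variables (V A : finType) (src dst : A -> V) (toll : pred A) (w : A -> nat).

Lemma tfdist_path u v k : tfdist src dst toll w u v = Some k ->
  exists p, [/\ is_path src dst u v p, all (predC toll) p & nlen w p = k].
Proof. by rewrite /tfdist; case: pselect => // ex [<-]; case: ex_minnP => n /asboolP. Qed.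

Lemma tfdist_le_walk u v r : walk src dst u v r -> all (predC toll) r ->
  exists2 k, tfdist src dst toll w u v = Some k & k <= nlen w r.
Proof.
move=> wr tfr; have [q pq sub_qr] := walk_shorten wr.
have tfq : tf_len src dst toll w u v (nlen w q).
  apply/asboolP; exists q; split=> //.
  by apply/allP=> e /(mem_subseq sub_qr); apply/allP.
have le_qr : nlen w q <= nlen w r.
  rewrite -(ler_nat int) /nlen !natr_sum; exact: ler_sum_subseq.
rewrite /tfdist; case: pselect => [ex|]; last by case; exists (nlen w q).
by exists (ex_minn ex) => //; case: ex_minnP => k _ /(_ _ tfq) /leq_trans; apply.
Qed.

End TollFreeDistance.

Section Greedy.
Variables (V A : finType) (src dst : A -> V) (toll : pred A) (w : A -> nat).
Variables (s t : V) (P : seq A) (R : realFieldType).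
Local Open Scope ring_scope.
Local Notation m := (size (tolls_of toll P)).
Local Notation U := (Uij src dst toll w s t P).
Local Notation Lk := (Lkl src dst toll w s t P).
Local Notation opt := (opt_tolls src dst toll w s t P R).

Definition feasible (tv : nat -> R) := forall i j u, (i < j)%N -> (j <= m.+1)%N ->
  U i j = Some u -> \sum_(i.+1 <= l < j) tv l <= u%:R - (Lk i j)%:R.

Definition greedy_toll k := nth 0 (opt m) k.-1.

Lemma size_opt_tolls n : size (opt n) = n.
Proof. by elim: n => //= n IH; rewrite size_rcons IH. Qed.

Lemma nth_opt_tolls N n l : (l < n)%N -> (n <= N)%N -> nth 0 (opt N) l = nth 0 (opt n) l.
Proof.
elim: N => [|N IH] ln nN; first by move: (leq_trans ln nN).
have [lt_Nn|le_nN] := ltnP N n; first by have -> : n = N.+1 by lia.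
by rewrite /= nth_rcons size_opt_tolls (leq_trans ln le_nN) IH.
Qed.

Lemma greedy_toll_next k : (0 < k)%N -> (k <= m)%N ->
  greedy_toll k = next_toll src dst toll w s t P (opt k.-1) k.
Proof.
case: k => [|k] // _ km; rewrite /greedy_toll (nth_opt_tolls (n := k.+1)) //=.
by rewrite nth_rcons size_opt_tolls ltnn eqxx.
Qed.

Lemma sum_opt_tolls k i : (0 < k)%N -> (k <= m)%N ->
  \sum_(i.+1 <= l < k) nth 0 (opt k.-1) l.-1 = \sum_(i.+1 <= l < k) greedy_toll l.
Proof.
move=> k_gt0 km; apply: eq_big_nat => l /andP[il lk].
by rewrite /greedy_toll (nth_opt_tolls (n := k.-1)) //; lia.
Qed.

Lemma mem_toll_pairs k i j : (k <= m)%N ->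
  ((i, j) \in [seq (i, j) | i <- iota 0 k, j <- iota k.+1 (m.+1 - k)]) =
  [&& (i < k)%N, (k < j)%N & (j <= m.+1)%N].
Proof.
move=> km; apply/allpairsPdep/and3P => [[i' [j' [+ + [-> ->]]]]|[ik kj jm]].
  by rewrite !mem_iota => *; split; lia.
by exists i, j; rewrite !mem_iota; split=> //; apply/andP; split; lia.
Qed.

Lemma greedy_toll_le k i j u : (0 < k)%N -> (k <= m)%N -> (i < k)%N -> (k < j)%N ->
  (j <= m.+1)%N -> U i j = Some u ->
  greedy_toll k <= u%:R - (Lk i j)%:R - \sum_(i.+1 <= l < k) greedy_toll l.
Proof.
move=> k_gt0 km ik kj jm Uu; rewrite greedy_toll_next // -sum_opt_tolls //.
apply: seqmin_le; apply/allpairsPdep; exists (i, j), u; split => //=.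
  by rewrite mem_toll_pairs // ik kj jm.
by rewrite Uu mem_seq1.
Qed.

Hypothesis U_0_last : exists u, U 0 m.+1 = Some u.

Lemma greedy_toll_attained k : (0 < k)%N -> (k <= m)%N -> exists i j u,
  [/\ (i < k)%N, (k < j)%N, (j <= m.+1)%N, U i j = Some u &
      greedy_toll k = u%:R - (Lk i j)%:R - \sum_(i.+1 <= l < k) greedy_toll l].
Proof.
move=> k_gt0 km; have [u0 Uu0] := U_0_last.
rewrite greedy_toll_next // /next_toll; set L := [seq _ | ij <- _, u <- _].
have : seqmin L \in L.
  apply: (@seqmin_in _ _ (u0%:R - (Lk 0 m.+1)%:R
      - \sum_(1 <= l < k) nth 0 (opt k.-1) l.-1)).
  apply/allpairsPdep; exists (0%N, m.+1), u0; split => //=.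
    by rewrite mem_toll_pairs //; apply/and3P; split; lia.
  by rewrite Uu0 mem_seq1.
case/allpairsPdep => -[i j] [u] [+ /=]; rewrite mem_toll_pairs // => /and3P[ik kj jm].
case Uij: (U i j) => [u'|] //; rewrite mem_seq1 => /eqP -> ->.
by exists i, j, u'; rewrite sum_opt_tolls.
Qed.

Hypothesis Lk_le_U : forall i j u, (i < j)%N -> (j <= m.+1)%N -> U i j = Some u ->
  (Lk i j <= u)%N.

Lemma greedy_prefix_le k i j u : (i <= k)%N -> (k < j)%N -> (j <= m.+1)%N ->
  U i j = Some u -> \sum_(i.+1 <= l < k.+1) greedy_toll l <= u%:R - (Lk i j)%:R.
Proof.
move=> ik kj jm Uu; have [lt_ik|le_ki] := ltnP i k.
  have [k_gt0 km] : (0 < k)%N /\ (k <= m)%N by lia.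
  have := greedy_toll_le k_gt0 km lt_ik kj jm Uu.
  by rewrite big_nat_recr //=; lra.
have ij : (i < j)%N by lia.
by rewrite big_geq ?subr_ge0 ?ler_nat ?(Lk_le_U ij jm Uu).
Qed.

Lemma greedy_feasible : feasible greedy_toll.
Proof.
move=> i j u ij jm Uu; have := greedy_prefix_le (k := j.-1) _ _ jm Uu.
by rewrite prednK; [apply; lia | lia].
Qed.

Lemma greedy_toll_ge0 k : (0 < k)%N -> (k <= m)%N -> 0 <= greedy_toll k.
Proof.
move=> k_gt0 km; have [i [j [u [ik kj jm Uu ->]]]] := greedy_toll_attained k_gt0 km.
have := greedy_prefix_le (k := k.-1) _ _ jm Uu; rewrite prednK // subr_ge0.
by apply; lia.
Qed.

Lemma greedy_sum_max (tv : nat -> R) :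
  (forall l, (0 < l)%N -> (l <= m)%N -> 0 <= tv l) -> feasible tv ->
  \sum_(1 <= l < m.+1) tv l <= \sum_(1 <= l < m.+1) greedy_toll l.
Proof.
move=> tv_ge0 tv_feas.
suff prefix_max k : (k <= m)%N ->
  \sum_(1 <= l < k.+1) tv l <= \sum_(1 <= l < k.+1) greedy_toll l by apply: prefix_max.
elim/ltn_ind: k => -[|k] IH km; first by rewrite !big_geq.
have [i [j [u [ik kj jm Uu tk]]]] := greedy_toll_attained (ltn0Sn k) km.
have split_at_i (F : nat -> R) : \sum_(1 <= l < k.+2) F l =
    \sum_(1 <= l < i.+1) F l + \sum_(i.+1 <= l < k.+2) F l.
  by apply: big_cat_nat; lia.
have greedy_tail : \sum_(i.+1 <= l < k.+2) greedy_toll l = u%:R - (Lk i j)%:R.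
  by rewrite big_nat_recr /= ?tk; [lra | lia].
have tv_tail : \sum_(i.+1 <= l < k.+2) tv l <= \sum_(i.+1 <= l < j) tv l.
  rewrite (@big_cat_nat _ _ _ k.+2 i.+1 j) /=; try lia.
  rewrite lerDl big_nat_cond; apply: sumr_ge0 => l /andP[/andP[kl lj] _].
  by apply: tv_ge0; lia.
have := IH i ik; have := tv_feas _ _ _ (ltn_trans ik kj) jm Uu.
rewrite !split_at_i greedy_tail => tv_le /(_ (leq_trans (ltnW ik) km)); lra.
Qed.

End Greedy.

Section TollArcsOfP.
Variables (V A : finType) (src dst : A -> V) (toll : pred A) (w : A -> nat).
Variables (s t : V) (P : seq A) (x0 : A).
Hypothesis P_path : is_path src dst s t P.
Local Notation tau := (tolls_of toll P).
Local Notation m := (size (tolls_of toll P)).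
Local Notation term a := (TERM dst toll s P a).
Local Notation init b := (INIT src toll t P b).

(* Toll arcs are numbered from 1 as in the paper: tau_a is [nth x0 tau a.-1].
   [after a] is the position in P right after tau_a (0 for a = 0) and
   [before b] the position of tau_b (size P for b = m+1), so [seg a b] is the
   subpath of P from TERM(tau_a) to INIT(tau_b). *)
Definition ntolls n := count toll (take n P).
Definition tpos a := index (nth x0 tau a.-1) P.
Definition after a := if a is 0 then 0 else (tpos a).+1.
Definition before b := if b <= m then tpos b else size P.
Definition vtx n := last s (map dst (take n P)).
Definition seg a b := drop (after a) (take (before b) P).

Lemma uniq_tolls : uniq tau.
Proof. by case/andP: P_path => _ /= /andP[_ /map_uniq uP]; apply: filter_uniq. Qed.

Lemma ntolls_le n : ntolls n <= m.
Proof.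
by rewrite /ntolls /tolls_of size_filter -{2}(cat_take_drop n P) count_cat leq_addr.
Qed.

Lemma ntollsS n : n < size P -> ntolls n.+1 = ntolls n + toll (nth x0 P n).
Proof. by move=> lt_nP; rewrite /ntolls (take_nth x0) // -cats1 count_cat /= addn0. Qed.

Lemma ntolls_mono n1 n2 : n1 <= n2 -> ntolls n1 <= ntolls n2.
Proof.
move=> le12; rewrite /ntolls -(take_takel P le12) -{2}(cat_take_drop n1 (take n2 P)).
by rewrite count_cat leq_addr.
Qed.

Lemma tolls_take n : filter toll (take n P) = take (ntolls n) tau.
Proof.
rewrite /tolls_of -{2}(cat_take_drop n P) filter_cat take_size_cat //.
by rewrite size_filter.
Qed.

Lemma nth_tolls_ntolls n : n < size P -> toll (nth x0 P n) ->
  nth x0 tau (ntolls n) = nth x0 P n.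
Proof.
move=> lt_nP tn; have := congr1 (nth x0 ^~ (ntolls n)) (tolls_take n.+1).
rewrite (take_nth x0) // filter_rcons tn nth_rcons size_filter ltnn eqxx => ->.
by rewrite nth_take // ntollsS // tn addn1.
Qed.

Section TollArc.
Variable a : nat.
Hypotheses (a_gt0 : 0 < a) (a_le_m : a <= m).

Lemma mem_nth_tolls : nth x0 tau a.-1 \in tau.
Proof. by rewrite mem_nth // prednK. Qed.

Lemma toll_nth_tolls : toll (nth x0 tau a.-1).
Proof. by have := mem_nth_tolls; rewrite mem_filter => /andP[]. Qed.

Lemma tpos_lt : tpos a < size P.
Proof. by have := mem_nth_tolls; rewrite mem_filter index_mem => /andP[]. Qed.

Lemma nth_tpos : nth x0 P (tpos a) = nth x0 tau a.-1.
Proof. by rewrite nth_index //; have := mem_nth_tolls; rewrite mem_filter => /andP[]. Qed.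

Lemma ntolls_tpos : ntolls (tpos a) = a.-1.
Proof.
have lt_m : ntolls (tpos a) < m.
  have := ntolls_le (tpos a).+1.
  by rewrite ntollsS ?tpos_lt // nth_tpos toll_nth_tolls addn1.
apply/eqP; rewrite -(nth_uniq x0 lt_m _ uniq_tolls) ?prednK //.
by rewrite nth_tolls_ntolls ?tpos_lt // nth_tpos ?toll_nth_tolls.
Qed.

Lemma TERM_nth : term a = dst (nth x0 tau a.-1).
Proof. by case: a a_gt0 a_le_m => // a' _ lt_a'm; rewrite /= onthE (nth_map x0). Qed.

Lemma INIT_nth : init a = src (nth x0 tau a.-1).
Proof. by case: a a_gt0 a_le_m => // a' _ lt_a'm; rewrite /= onthE (nth_map x0). Qed.

End TollArc.

Lemma INIT_last : init m.+1 = t.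
Proof. by rewrite /= onthE nth_default // size_map. Qed.

Lemma ntolls_after a : a <= m -> ntolls (after a) = a.
Proof.
case: a => [|a] le_am /=; first by rewrite /ntolls take0.
by rewrite ntollsS ?tpos_lt // ntolls_tpos // nth_tpos // toll_nth_tolls // addn1.
Qed.

Lemma after_mono a b : a <= b -> b <= m -> after a <= after b.
Proof.
move=> ab bm; rewrite leqNgt; apply/negP => lt_ba.
have := ntolls_mono (ltnW lt_ba); rewrite !ntolls_after ?(leq_trans ab) // => ba.
have eq_ab : a = b by lia.
by rewrite eq_ab ltnn in lt_ba.
Qed.

Lemma after_le_before a b : a < b -> b <= m.+1 -> after a <= before b.
Proof.
case: a => [//|a] ab bm /=; rewrite /before.
case: ifP => [b_le_m|_]; last by apply: tpos_lt; lia.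
rewrite ltnNge; apply/negP => /ntolls_mono; rewrite !ntolls_tpos //; lia.
Qed.

Lemma walk_take n : walk src dst s (vtx n) (take n P).
Proof. by case/andP: P_path; rewrite -{1}(cat_take_drop n P) walk_cat => /andP[]. Qed.

Lemma walk_drop n : walk src dst (vtx n) t (drop n P).
Proof. by case/andP: P_path; rewrite -{1}(cat_take_drop n P) walk_cat => /andP[]. Qed.

Lemma walk_drop_take n1 n2 : n1 <= n2 ->
  walk src dst (vtx n1) (vtx n2) (drop n1 (take n2 P)).
Proof.
move=> le12; have := walk_take n2; rewrite -{1}(cat_take_drop n1 (take n2 P)) walk_cat.
by rewrite take_takel // => /andP[].
Qed.

Lemma vtx_after a : a <= m -> vtx (after a) = term a.
Proof.
case: a => [|a] le_am; first by rewrite /vtx take0.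
by rewrite /vtx /= (take_nth x0) ?tpos_lt // map_rcons last_rcons nth_tpos // -TERM_nth.
Qed.

Lemma vtx_before b : 0 < b -> b <= m.+1 -> vtx (before b) = init b.
Proof.
move=> b_gt0 bm; rewrite /before; case: ifP => [b_le_m|b_gt_m].
  have := walk_drop (tpos b); rewrite (drop_nth x0) ?tpos_lt // nth_tpos //.
  by case/andP=> /eqP <- _; rewrite INIT_nth.
have -> : b = m.+1 by lia.
by rewrite INIT_last /vtx take_size; case/andP: P_path => /walk_last.
Qed.

Lemma walk_take_after a : a <= m -> walk src dst s (term a) (take (after a) P).
Proof. by move=> am; rewrite -vtx_after //; apply: walk_take. Qed.

Lemma walk_drop_before b : 0 < b -> b <= m.+1 ->
  walk src dst (init b) t (drop (before b) P).
Proof. by move=> b_gt0 bm; rewrite -vtx_before //; apply: walk_drop. Qed.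

Lemma walk_seg a b : a < b -> b <= m.+1 -> walk src dst (term a) (init b) (seg a b).
Proof.
move=> ab bm; rewrite -vtx_after -?vtx_before; try lia.
exact/walk_drop_take/after_le_before.
Qed.

Lemma seg_last a : seg a m.+1 = drop (after a) P.
Proof. by rewrite /seg /before ltnn take_size. Qed.

Lemma cat_seg a b : a < b -> b <= m.+1 ->
  take (after a) P ++ seg a b ++ drop (before b) P = P.
Proof.
move=> ab bm; rewrite catA -(take_takel P (after_le_before ab bm)).
by rewrite cat_take_drop cat_take_drop.
Qed.

Lemma seg_split a b c : a < b -> b < c -> c <= m.+1 ->
  seg a c = seg a b ++ nth x0 tau b.-1 :: seg b c.
Proof.
move=> ab bc cm; have b_le_m : b <= m by lia.
have before_b : before b = tpos b by rewrite /before b_le_m.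
have after_b : after b = (tpos b).+1 by case: b ab {bc b_le_m before_b}.
have ab' := after_le_before ab (leq_trans b_le_m (leqnSn m)).
have bc' := after_le_before bc cm.
rewrite before_b in ab'; rewrite after_b in bc'.
rewrite /seg (drop_take_nth x0 ab' bc') ?tpos_lt ?nth_tpos; try lia.
by rewrite before_b after_b.
Qed.

Lemma drop_after_split a b : a < b -> b <= m ->
  drop (after a) P = seg a b ++ nth x0 tau b.-1 :: drop (after b) P.
Proof. by move=> ab bm; rewrite -!seg_last; apply: seg_split. Qed.

Lemma ntolls_before b : 0 < b -> b <= m.+1 -> ntolls (before b) = b.-1.
Proof.
move=> b_gt0 bm; rewrite /before.
case: ifP => [b_le_m|/negbT b_gt_m]; first exact: ntolls_tpos.
have -> : b = m.+1 by lia.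
by rewrite /ntolls take_size /tolls_of size_filter.
Qed.

Lemma seg_succ_toll_free l : l <= m -> all (predC toll) (seg l l.+1).
Proof.
move=> lm; rewrite all_predC has_count -leqNgt leqn0.
have := ntolls_before (ltn0Sn l) lm; rewrite /ntolls /seg.
rewrite -{1}(cat_take_drop (after l) (take (before l.+1) P)) count_cat.
rewrite take_takel ?after_le_before // -/(ntolls (after l)) ntolls_after //; lia.
Qed.

Local Open Scope ring_scope.
Local Notation U := (Uij src dst toll w s t P).
Local Notation Lk := (Lkl src dst toll w s t P).

Section Costs.
Variables (R : realFieldType) (T : A -> R).
Local Notation len := (rlen toll w T).

Lemma rlen_cat p1 p2 : len (p1 ++ p2) = len p1 + len p2.
Proof. exact: big_cat. Qed.

Lemma rlen_cons e p : len (e :: p) = costT toll w T e + len p.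
Proof. exact: big_cons. Qed.

Lemma rlen_rcons p e : len (rcons p e) = len p + costT toll w T e.
Proof. by rewrite -cats1 /rlen big_cat big_seq1. Qed.

Lemma rlen_toll_free p : all (predC toll) p -> len p = (nlen w p)%:R.
Proof.
move=> tf_p; rewrite /rlen /nlen natr_sum; apply: eq_big_seq => e /(allP tf_p) /negbTE.
by rewrite /costT => ->; rewrite addr0.
Qed.

Lemma rlen_seg a b : (a < b)%N -> (b <= m.+1)%N ->
  len (seg a b) = (nlen w (seg a b))%:R + \sum_(a.+1 <= l < b) T (nth x0 tau l.-1).
Proof.
elim: b => // b IH ab bm.
have [eq_ab|lt_ab] : a = b \/ (a < b)%N by lia.
  by subst a; rewrite big_geq // addr0 rlen_toll_free // seg_succ_toll_free.
have b_le_m : (b <= m)%N by lia.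
rewrite (seg_split lt_ab (ltnSn b) bm) big_nat_recr ?rlen_cat ?rlen_cons ?IH /=; try lia.
rewrite rlen_toll_free ?seg_succ_toll_free // /nlen big_cat big_cons /= !natrD.
by rewrite /costT toll_nth_tolls //; [lra | lia].
Qed.

Hypothesis T_ge0 : toll_vector toll T.

Lemma costT_ge0 e : 0 <= costT toll w T e.
Proof.
by rewrite /costT; case: ifP => [/T_ge0|_]; rewrite ?addr0 // => T_e; rewrite addr_ge0.
Qed.

Lemma rlen_ge0 p : 0 <= len p.
Proof. by apply: sumr_ge0 => e _; apply: costT_ge0. Qed.

Lemma rlen_subseq q p : subseq q p -> len q <= len p.
Proof. exact/ler_sum_subseq/costT_ge0. Qed.

Lemma rlen_drop_after_mono a b : (b <= a)%N -> (a <= m)%N ->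
  len (drop (after a) P) <= len (drop (after b) P).
Proof.
move=> ba am; apply: rlen_subseq.
by rewrite -(subnK (after_mono ba am)) -drop_drop drop_subseq.
Qed.

Definition seg_bounded := forall a b u, (a < b)%N -> (b <= m.+1)%N ->
  U a b = Some u -> len (seg a b) <= u%:R.

Lemma consistent_seg_bounded : consistent src dst toll w s t P T -> seg_bounded.
Proof.
move=> T_cons a b u ab bm /tfdist_path[q [/andP[wq _] tf_q len_q]].
have am : (a <= m)%N by lia.
set W := take (after a) P ++ q ++ drop (before b) P.
have wW : walk src dst s t W.
  rewrite /W walk_cat (walk_last (walk_take_after am)) walk_take_after //=.
  by rewrite walk_cat (walk_last wq) wq walk_drop_before //; lia.
have [p p_path sub_pW] := walk_shorten wW.
have p_in : all (inN toll P) p.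
  apply/allP => e /(mem_subseq sub_pW); rewrite /inN !mem_cat.
  by case/or3P => [/mem_take -> | /(allP tf_q) /= -> | /mem_drop ->]; rewrite ?orbT.
have len_P : len P = len (take (after a) P) + len (seg a b) + len (drop (before b) P).
  by rewrite -{1}(cat_seg ab bm) !rlen_cat addrA.
have := T_cons p p_path p_in; have := rlen_subseq sub_pW.
rewrite len_P /W !rlen_cat (rlen_toll_free tf_q) len_q; lra.
Qed.

Section Sufficiency.
Hypothesis T_bounded : seg_bounded.

(* Induction along a competing walk q: r is the toll-free stretch walked since
   leaving tau_a, and every toll arc met on q is some tau_b. *)
Lemma rlen_drop_after_le q x a r :
  walk src dst x t q -> all (inN toll P) q -> (a <= m)%N ->
  walk src dst (term a) x r -> all (predC toll) r ->
  len (drop (after a) P) <= len r + len q.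
Proof.
have len_nil : len [::] = 0 by rewrite /rlen big_nil.
elim: q x a r => [|e q IH] x a r /=.
  move=> /eqP -> _ am wr tf_r; rewrite -INIT_last in wr.
  have [k Uk le_k] := tfdist_le_walk w wr tf_r.
  have := T_bounded (am : (a < m.+1)%N) (leqnn _) Uk.
  rewrite seg_last (rlen_toll_free tf_r) len_nil.
  by rewrite -(ler_nat R) in le_k; lra.
move=> /andP[/eqP se wq] /andP[e_in q_in] am wr tf_r; rewrite rlen_cons.
have [te|nte] := boolP (toll e); last first.
  have := IH _ _ (rcons r e) wq q_in am (walk_rcons wr se).
  by rewrite all_rcons /= nte tf_r rlen_rcons => /(_ isT); lra.
have e_tau : e \in tau by rewrite mem_filter te; rewrite /inN te in e_in.
set b := (index e tau).+1.
have bm : (b <= m)%N by rewrite index_mem.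
have tau_b : nth x0 tau b.-1 = e by rewrite nth_index.
have := IH _ b [::] wq q_in bm; rewrite TERM_nth // tau_b /= eqxx len_nil add0r.
move=> /(_ isT isT) IHb.
have := rlen_ge0 r; have := costT_ge0 e.
have [ab|ba] := ltnP a b; last by have := rlen_drop_after_mono ba am; lra.
rewrite -se -tau_b -INIT_nth // in wr; have [k Uk le_k] := tfdist_le_walk w wr tf_r.
have := T_bounded ab (leq_trans bm (leqnSn m)) Uk; rewrite -(ler_nat R) in le_k.
rewrite (drop_after_split ab bm) tau_b rlen_cat rlen_cons (rlen_toll_free tf_r); lra.
Qed.

Lemma seg_bounded_consistent : consistent src dst toll w s t P T.
Proof.
move=> p /andP[wp _] p_in.
have := rlen_drop_after_le (r := [::]) wp p_in (leq0n m) (eqxx s) isT.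
by rewrite /= drop0 [len [::]]big_nil add0r.
Qed.

End Sufficiency.
End Costs.

Section Optimality.
Hypothesis P_valid : valid src dst toll w s t P.
Hypothesis st_toll_free : exists p, is_path src dst s t p && all (predC toll) p.

Lemma nlen_seg_le_Uij a b u : (a < b)%N -> (b <= m.+1)%N -> U a b = Some u ->
  (nlen w (seg a b) <= u)%N.
Proof.
(* Validity of P is consistency of the zero toll vector, over any ordered field. *)
have rlen0 p : rlen toll w (fun _ => 0 : rat) p = (nlen w p)%:R.
  by rewrite /rlen /nlen natr_sum; apply: eq_bigr => e _; rewrite /costT if_same addr0.
have zero_consistent : consistent src dst toll w s t P (fun _ => 0 : rat).
  by case: P_valid => _ _ shortest p p_path p_in; rewrite !rlen0 ler_nat shortest.
move=> ab bm Uu.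
have := consistent_seg_bounded (fun _ _ => lexx 0) zero_consistent ab bm Uu.
by rewrite rlen0 ler_nat.
Qed.

Lemma Uij_succ l : (l <= m)%N -> U l l.+1 = Some (nlen w (seg l l.+1)).
Proof.
move=> lm.
have [k Uk le_k] := tfdist_le_walk w (walk_seg (ltnSn l) lm) (seg_succ_toll_free lm).
rewrite /Uij Uk; congr Some; apply/eqP; rewrite eqn_leq le_k.
exact: nlen_seg_le_Uij (ltnSn l) lm Uk.
Qed.

Lemma Lkl_seg a b : (a < b)%N -> (b <= m.+1)%N -> Lk a b = nlen w (seg a b).
Proof.
elim: b => // b IH ab bm.
have [eq_ab|lt_ab] : a = b \/ (a < b)%N by lia.
  by subst a; rewrite /Lkl big_nat1 big_geq // addn0 (Uij_succ bm).
have b_le_m : (b <= m)%N by lia.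
have Lk_succ : Lk a b.+1 = (Lk a b + nlen w (seg b b.+1) + w (nth x0 tau b.-1))%N.
  rewrite /Lkl !big_nat_recr //= Uij_succ // /ctau (nth_map x0) /=; lia.
rewrite Lk_succ (IH lt_ab (ltnW bm)) (seg_split lt_ab (ltnSn b) bm).
by rewrite /nlen big_cat big_cons /=; lia.
Qed.

Lemma Lkl_le_Uij a b u : (a < b)%N -> (b <= m.+1)%N -> U a b = Some u -> (Lk a b <= u)%N.
Proof. by move=> ab bm Uu; rewrite Lkl_seg // nlen_seg_le_Uij. Qed.

Lemma Uij_0_last : exists u, U 0 m.+1 = Some u.
Proof.
case: st_toll_free => p /andP[/andP[wp _] tf_p]; rewrite -INIT_last in wp.
by have [k Uk _] := tfdist_le_walk w wp tf_p; exists k.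
Qed.

Variable R : realFieldType.
Local Notation greedy := (greedy_toll src dst toll w s t P R).
Local Notation feasible := (feasible src dst toll w s t P).

Lemma seg_bounded_feasible (T : A -> R) :
  seg_bounded T <-> feasible (fun l => T (nth x0 tau l.-1)).
Proof.
split=> bounded i j u ij jm Uu; have := bounded _ _ _ ij jm Uu.
all: by rewrite rlen_seg // Lkl_seg //; lra.
Qed.

Local Notation Topt := (Topt src dst toll w s t P R).

Lemma Topt_nth l : (0 < l)%N -> (l <= m)%N -> Topt (nth x0 tau l.-1) = greedy l.
Proof.
move=> l_gt0 lm; have lt_lm : (l.-1 < m)%N by lia.
by rewrite /Topt mem_nth_tolls // index_uniq ?uniq_tolls.
Qed.

Lemma Topt_toll_vector : toll_vector toll Topt.
Proof.
move=> e _; rewrite /Topt; case: ifP => // e_tau.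
have := greedy_toll_ge0 R Uij_0_last (@Lkl_le_Uij) (ltn0Sn (index e tau)).
by rewrite index_mem e_tau => /(_ isT).
Qed.

Lemma Topt_consistent : consistent src dst toll w s t P Topt.
Proof.
apply: seg_bounded_consistent Topt_toll_vector _; apply/seg_bounded_feasible.
move=> i j u ij jm Uu; rewrite (eq_big_nat _ _ (F2 := greedy)).
  exact: (greedy_feasible R (@Lkl_le_Uij) ij jm Uu).
by move=> l /andP[il lj]; apply: Topt_nth; lia.
Qed.

Lemma Topt_max (T' : A -> R) : toll_vector toll T' -> consistent src dst toll w s t P T' ->
  \sum_(e <- tau) T' e <= \sum_(x <- opt_tolls src dst toll w s t P R m) x.
Proof.
move=> T'_ge0 T'_cons.
have sum_nth (I : Type) (i0 : I) (r : seq I) (F : I -> R) :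
    \sum_(i <- r) F i = \sum_(1 <= l < (size r).+1) F (nth i0 r l.-1).
  by rewrite (big_nth i0) big_add1.
rewrite (sum_nth _ x0) (sum_nth _ 0 _ id) size_opt_tolls.
apply: (greedy_sum_max Uij_0_last (tv := fun l => T' (nth x0 tau l.-1))).
- by move=> l l_gt0 lm; apply/T'_ge0/toll_nth_tolls.
- exact/seg_bounded_feasible/consistent_seg_bounded.
Qed.

End Optimality.
End TollArcsOfP.

Unset Implicit Arguments.
Local Open Scope ring_scope.

Theorem corollary1 (V A : finType) (src dst : A -> V) (toll : pred A)
  (w : A -> nat) (s t : V) (R : realFieldType) (P : seq A) :
  (exists p, is_path src dst s t p && all (predC toll) p) ->
  valid src dst toll w s t P ->
  let tau := tolls_of toll P in
  let ts := opt_tolls src dst toll w s t P R (size tau) in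
  let T := Topt src dst toll w s t P R in
  [/\ toll_vector toll T,
      consistent src dst toll w s t P T &
      forall T' : A -> R, toll_vector toll T' ->
        consistent src dst toll w s t P T' ->
        \sum_(e <- tau) T' e <= \sum_(x <- ts) x].
Proof.
move=> st_toll_free P_valid tau ts T.
have [P_path has_tolls _] := P_valid.
have x0 : A by case: (tolls_of toll P) has_tolls => [|x0 ?].
split.
- exact: Topt_toll_vector x0 P_path P_valid st_toll_free R.
- exact: Topt_consistent x0 P_path P_valid st_toll_free R.
- exact: (Topt_max x0 P_path P_valid st_toll_free (R := R)).
Qed.
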